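(* Fix a constant $c>0$. There is a constant $C$ (depending only on $c$) such that for every $n=2^k$ and every $c$-Ramsey graph $G$ with $n$ vertices, the formula $\Psi_G$ has a treelike resolution refutation with at most $n^{C\log n}$ clauses; i.e. of size $n^{O(\log n)}$.
   Context: Logarithms are base 2. A graph $G$ on $n$ vertices is $c$-Ramsey if no set of $c\log n$ vertices is a clique or an independent set. A resolution refutation of a CNF is a sequence of clauses, each a clause of the formula or derived from earlier clauses $A\lor x$, $B\lor\neg x$ as $A\lor B$, ending in the empty clause; it is treelike if each derived clause is used as a premise at most once. For a graph $G$ on $n=2^k$ vertices, identify vertices with strings $v=v_1\cdots v_k\in\{0,1\}^k$ (assume $ck$ is an integer). $\Psi_G$ has variables $x^i_b$ ($i\in[ck]$, $b\in[k]$) and $y$; $(x^i_b\ne v_b)$ denotes $\neg x^i_b$ if $v_b=1$ and $x^i_b$ if $v_b=0$. Clauses: (1) for each vertex $v$ and distinct $i,j$: $\bigvee_b(x^i_b\ne v_b)\lor\bigvee_b(x^j_b\ne v_b)$; (2) for distinct $u,v$ with $\{u,v\}\in E(G)$ and distinct $i,j$: $y\lor\bigvee_b(x^i_b\ne u_b)\lor\bigvee_b(x^j_b\ne v_b)$; (3) for distinct $u,v$ with $\{u,v\}\notin E(G)$ and distinct $i,j$: $\neg y\lor\bigvee_b(x^i_b\ne u_b)\lor\bigvee_b(x^j_b\ne v_b)$. *)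

From HB Require Import structures.
From mathcomp Require Import all_boot all_order all_algebra.
From mathcomp Require Export reals.
Set Implicit Arguments. Unset Strict Implicit. Unset Printing Implicit Defensive.

(* Vertices of a graph on n = 2^k vertices are bit strings
   v = v_1 ... v_k, i.e. functions 'I_k -> bool.  m plays the role of c*k = c log n. *)
Definition vert (k : nat) := {ffun 'I_k -> bool}.

(* Variables of Psi_G: x^i_b (i < m, b < k) encoded as inl (i,b), and y as inr tt. *)
Definition var (m k : nat) := (('I_m * 'I_k) + unit)%type.
(* A literal is a variable with a polarity (true = positive, false = negated). *)
Definition lit (m k : nat) := (var m k * bool)%type.
Definition clause (m k : nat) := {set lit m k}.

(* The literal (x^i_b != v_b): negated x^i_b if v_b = 1, positive x^i_b if v_b = 0. *)
Definition neqlit m k (i : 'I_m) (b : 'I_k) (v : vert k) : lit m k :=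
  (inl (i, b), ~~ v b).
Definition vclause m k (i : 'I_m) (v : vert k) : clause m k :=
  [set neqlit i b v | b : 'I_k].
Definition ylit m k (pol : bool) : lit m k := (inr tt, pol).

Definition Psi m k (G : rel (vert k)) (C : clause m k) : Prop :=
  (exists (v : vert k) (i j : 'I_m), i != j /\ C = vclause i v :|: vclause j v)
  \/ (exists (u v : vert k) (i j : 'I_m), u != v /\ G u v /\ i != j /\
        C = [set ylit m k true] :|: vclause i u :|: vclause j v)
  \/ (exists (u v : vert k) (i j : 'I_m), u != v /\ ~~ G u v /\ i != j /\
        C = [set ylit m k false] :|: vclause i u :|: vclause j v).

Definition is_clique k (G : rel (vert k)) (S : {set vert k}) : Prop :=
  forall u v, u \in S -> v \in S -> u != v -> G u v.
Definition is_indep k (G : rel (vert k)) (S : {set vert k}) : Prop :=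
  forall u v, u \in S -> v \in S -> u != v -> ~~ G u v.
Definition ramsey_m k (G : rel (vert k)) (m : nat) : Prop :=
  forall S : {set vert k}, #|S| = m -> ~ is_clique G S /\ ~ is_indep G S.

Definition resolvent m k (C1 C2 D : clause m k) : Prop :=
  exists (x : var m k) (A B : clause m k),
    C1 = A :|: [set (x, true)] /\ C2 = B :|: [set (x, false)] /\ D = A :|: B.

Inductive just := Ax | Res of nat & nat.
Definition line m k := (clause m k * just)%type.
Definition rproof m k := seq (line m k).
Definition dline m k : line m k := (set0, Ax).

Definition valid_line m k (F : clause m k -> Prop) (P : rproof m k) (p : nat) : Prop :=
  let l := nth (dline m k) P p in
  match l.2 with
  | Ax => F l.1
  | Res i j => (i < p)%N /\ (j < p)%N /\
      (resolvent (nth (dline m k) P i).1 (nth (dline m k) P j).1 l.1 \/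
       resolvent (nth (dline m k) P j).1 (nth (dline m k) P i).1 l.1)
  end.

Definition is_refutation m k (F : clause m k -> Prop) (P : rproof m k) : Prop :=
  P <> [::] /\ (forall p, (p < size P)%N -> valid_line F P p) /\
  (nth (dline m k) P (size P).-1).1 = set0.

Definition premises m k (l : line m k) : seq nat :=
  match l.2 with Ax => [::] | Res i j => [:: i; j] end.
Definition is_derived m k (l : line m k) : bool :=
  match l.2 with Ax => false | Res _ _ => true end.

Definition treelike m k (P : rproof m k) : Prop :=
  forall q, (q < size P)%N -> is_derived (nth (dline m k) P q) ->
    (count (pred1 q) (flatten (map (@premises m k) P)) <= 1)%N.

From HB Require Import structures.
From mathcomp Require Import all_boot all_order all_algebra.
From mathcomp Require Import reals.
From mathcomp Require Import zify.
Import Order.TTheory GRing.Theory Num.Theory.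
Set Implicit Arguments. Unset Strict Implicit. Unset Printing Implicit Defensive.

(* Any unsatisfiable CNF in N variables has a treelike resolution refutation
   with fewer than 2^(N+1) clauses: follow the complete decision tree on the
   variables, label each leaf by a clause falsified there, and resolve on the
   branching variable at each inner node.  Psi_G is unsatisfiable when G is
   c-Ramsey and has c log^2 n + 1 variables, hence such a refutation of size
   n^(O(log n)). *)

Section DerivationTrees.
Variables m k : nat.
Variable F : clause m k -> Prop.

Local Notation dl := (dline m k).

Inductive tree := Leaf of clause m k | Node of clause m k & tree & tree.

Definition concl t := match t with Leaf C => C | Node C _ _ => C end.

Fixpoint tsize t :=
  match t with Leaf _ => 1 | Node _ t1 t2 => tsize t1 + tsize t2 + 1 end.

Fixpoint derivation t :=
  match t with
  | Leaf C => F C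
  | Node C t1 t2 => [/\ derivation t1, derivation t2 & resolvent (concl t1) (concl t2) C]
  end.

(* Post-order listing of [t] placed at position [o] of the proof, so premise
   indices are absolute. *)
Fixpoint linearize t o : rproof m k :=
  match t with
  | Leaf C => [:: (C, Ax)]
  | Node C t1 t2 =>
      linearize t1 o ++ linearize t2 (o + tsize t1) ++
      [:: (C, Res (o + tsize t1).-1 (o + tsize t1 + tsize t2).-1)]
  end.

Lemma tsize_gt0 t : 0 < tsize t.
Proof. by case: t => //= *; rewrite addn1. Qed.

Lemma size_linearize t o : size (linearize t o) = tsize t.
Proof.
by elim: t o => //= C t1 IH1 t2 IH2 o; rewrite !size_cat IH1 IH2 addnA addn1.
Qed.

Lemma last_linearize t o : (last dl (linearize t o)).1 = concl t.
Proof. by case: t => //= C t1 t2; rewrite !last_cat. Qed.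

Definition embeds (P L : rproof m k) o :=
  forall p, p < size L -> nth dl P (o + p) = nth dl L p.

Lemma embeds_catl P L1 L2 o : embeds P (L1 ++ L2) o -> embeds P L1 o.
Proof.
move=> HP p lt_p; rewrite HP ?nth_cat ?lt_p // size_cat.
exact: leq_trans lt_p (leq_addr _ _).
Qed.

Lemma embeds_catr P L1 L2 o : embeds P (L1 ++ L2) o -> embeds P L2 (o + size L1).
Proof.
move=> HP p lt_p; rewrite -addnA HP ?size_cat ?ltn_add2l //.
by rewrite nth_cat ltnNge leq_addr /= addKn.
Qed.

Lemma embeds_concl P t o :
  embeds P (linearize t o) o -> (nth dl P (o + (tsize t).-1)).1 = concl t.
Proof.
move=> HP; have lt_last : (tsize t).-1 < size (linearize t o).
  by rewrite size_linearize prednK ?tsize_gt0.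
by rewrite HP // -(size_linearize t o) nth_last last_linearize.
Qed.

Lemma embeds_linearize_node P C t1 t2 o :
  let o2 := o + tsize t1 in
  embeds P (linearize (Node C t1 t2) o) o ->
  [/\ embeds P (linearize t1 o) o, embeds P (linearize t2 o2) o2
    & nth dl P (o2 + tsize t2) = (C, Res o2.-1 (o2 + tsize t2).-1)].
Proof.
move=> o2 HP; have HP2 := embeds_catr HP; rewrite size_linearize -/o2 in HP2.
split; [exact: embeds_catl HP | exact: embeds_catl HP2 |].
have := embeds_catr HP2; rewrite size_linearize => HC.
by have := HC 0 isT; rewrite addn0.
Qed.

Lemma valid_linearize P t o : derivation t -> embeds P (linearize t o) o ->
  forall p, o <= p < o + tsize t -> valid_line F P p.
Proof.
elim: t o => [C|C t1 IH1 t2 IH2] o /=.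
  move=> FC HP p; rewrite addn1 ltnS -eqn_leq => /eqP <-.
  by rewrite /valid_line -(addn0 o) HP.
case=> [d1 d2 res] HP p /andP[le_op lt_p].
have [HP1 HP2 HC] := embeds_linearize_node HP.
have g1 := tsize_gt0 t1; have g2 := tsize_gt0 t2.
case: (ltnP p (o + tsize t1)) => [lt1|ge1].
  by apply: (IH1 o) => //; rewrite le_op.
case: (ltnP p (o + tsize t1 + tsize t2)) => [lt2|ge2].
  by apply: (IH2 (o + tsize t1)) => //; rewrite ge1.
have -> : p = o + tsize t1 + tsize t2 by lia.
rewrite /valid_line HC /=; split; [lia | split; [lia | left]].
have -> : (o + tsize t1).-1 = o + (tsize t1).-1 by lia.
have -> : (o + tsize t1 + tsize t2).-1 = o + tsize t1 + (tsize t2).-1 by lia.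
by rewrite !embeds_concl.
Qed.

(* Every line but the last is the premise of exactly one inference. *)
Lemma perm_premises_linearize t o :
  perm_eq (flatten (map (@premises m k) (linearize t o))) (iota o (tsize t).-1).
Proof.
elim: t o => [C|C t1 IH1 t2 IH2] o //=.
rewrite !map_cat !flatten_cat /=.
have [a Ea] : exists a, tsize t1 = a.+1 by exists (tsize t1).-1; rewrite prednK ?tsize_gt0.
have [b Eb] : exists b, tsize t2 = b.+1 by exists (tsize t2).-1; rewrite prednK ?tsize_gt0.
move: (IH1 o) (IH2 (o + tsize t1)); rewrite Ea Eb /= => perm1 perm2.
have -> : a + b.+1 + 1 = a + (1 + (b + 1)) by lia.
rewrite !iotaD /=.
have -> : (o + a.+1).-1 = o + a by lia.
have -> : o + a + 1 = o + a.+1 by lia.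
have -> : (o + a.+1 + b.+1).-1 = o + a.+1 + b by lia.
apply: perm_cat => //; rewrite -[[:: _; _]]/([:: _] ++ [:: _]) perm_catCA /=.
by rewrite perm_cons perm_cat2r.
Qed.

Lemma treelike_linearize t o : treelike (linearize t o).
Proof.
move=> q _ _; rewrite (permP (perm_premises_linearize t o)).
by rewrite count_uniq_mem ?iota_uniq ?leq_b1.
Qed.

Lemma refutation_linearize t : derivation t -> concl t = set0 ->
  is_refutation F (linearize t 0).
Proof.
move=> dt concl0; split; [|split].
- by move/(congr1 size); rewrite size_linearize /=; case: (tsize t) (tsize_gt0 t).
- move=> p; rewrite size_linearize => lt_p.
  have embeds_self : embeds (linearize t 0) (linearize t 0) 0 by move=> q _.
  exact: (valid_linearize dt embeds_self).
- by rewrite nth_last last_linearize.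
Qed.

End DerivationTrees.

Section DecisionTrees.
Variables m k : nat.

Definition falsifies (a : var m k -> bool) (D : clause m k) :=
  {in D, forall l, a l.1 = ~~ l.2}.

Definition falsifies_avoiding (vs : seq (var m k)) a (D : clause m k) :=
  {in D, forall l, a l.1 = ~~ l.2 /\ l.1 \notin vs}.

Lemma resolvent_setD1 x (C0 C1 : clause m k) :
  (x, true) \in C0 -> (x, false) \in C1 ->
  resolvent C0 C1 (C0 :\ (x, true) :|: C1 :\ (x, false)).
Proof.
move=> x0 x1; exists x, (C0 :\ (x, true)), (C1 :\ (x, false)).
by rewrite !(setUC _ [set _]) !setD1K.
Qed.

Lemma falsifies_avoiding_update vs a x b (D : clause m k) :
  falsifies_avoiding vs [eta a with x |-> b] D ->
  {in D, forall l, l != (x, ~~ b) -> a l.1 = ~~ l.2 /\ l.1 \notin x :: vs}.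
Proof.
move=> falsD [y p] lD ne_l; have /= [] := falsD _ lD.
case: (eqVneq y x) => [eq_yx|ne_yx fals_y avoid_y].
  by subst y => /= eq_b; rewrite eq_b negbK eqxx in ne_l.
by rewrite in_cons negb_or ne_yx avoid_y.
Qed.

Variable F : clause m k -> Prop.
Hypothesis F_unsat : forall a, exists2 C, F C & falsifies a C.

(* Split on the variables of [vs] one by one; at the leaves the assignment
   falsifies some clause of [F].  A literal on the split variable that survives
   in both subtrees is resolved away. *)
Lemma derivation_falsified_avoiding vs a : exists t,
  [/\ derivation F t, falsifies_avoiding vs a (concl t) & tsize t < 2 ^ (size vs).+1].
Proof.
elim: vs a => [|x vs IH] a.
  by have [C FC falsC] := F_unsat a; exists (Leaf C); split=> // l /falsC.
have [t1 [d1 /falsifies_avoiding_update upd1 size1]] := IH [eta a with x |-> true].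
have [t0 [d0 /falsifies_avoiding_update upd0 size0]] := IH [eta a with x |-> false].
rewrite /= expnS mul2n -addnn.
have [x1|x1] := boolP ((x, false) \in concl t1); last first.
  exists t1; split=> //; last exact: ltn_addr.
  by move=> l lD; apply: upd1 => //; apply: contraNneq x1 => <-.
have [x0|x0] := boolP ((x, true) \in concl t0); last first.
  exists t0; split=> //; last exact: ltn_addl.
  by move=> l lD; apply: upd0 => //; apply: contraNneq x0 => <-.
exists (Node (concl t0 :\ (x, true) :|: concl t1 :\ (x, false)) t0 t1).
split; first by split=> //; apply: resolvent_setD1.
  by move=> l /setUP[] /setD1P[ne lD]; [apply: upd0 | apply: upd1].
by rewrite /=; lia.
Qed.

Lemma treelike_refutation_of_unsat : exists P : rproof m k,
  [/\ is_refutation F P, treelike P & size P < 2 ^ (m * k).+2].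
Proof.
have [t [dt falst size_t]] :=
  derivation_falsified_avoiding (enum [set: var m k]) (fun=> false).
have concl0 : concl t = set0.
  by apply/setP=> l; rewrite inE; apply/negP=> /falst[_]; rewrite mem_enum inE.
exists (linearize t 0); split; first exact: refutation_linearize.
  exact: treelike_linearize.
rewrite size_linearize; apply: leq_trans size_t _.
by rewrite -cardE cardsT card_sum card_prod !card_ord card_unit addn1.
Qed.

End DecisionTrees.

Section RamseyFormula.
Variables m k : nat.
Variable G : rel (vert k).

Definition vertex_of (a : var m k -> bool) (i : 'I_m) : vert k :=
  [ffun b => a (inl (i, b))].

Lemma falsifies_vclause a i : falsifies a (vclause i (vertex_of a i)).
Proof. by move=> l /imsetP[b _ ->] /=; rewrite ffunE negbK. Qed.

Lemma falsifies_pair_clause a pol i j : a (inr tt) = ~~ pol ->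
  falsifies a ([set ylit m k pol] :|: vclause i (vertex_of a i) :|: vclause j (vertex_of a j)).
Proof.
move=> ay l /setUP[/setUP[/set1P -> //|]|]; exact: falsifies_vclause.
Qed.

Lemma not_clique_exists (H : rel (vert k)) S : ~ is_clique H S ->
  exists u v, [/\ u \in S, v \in S, u != v & ~~ H u v].
Proof.
move=> not_clique.
have [/existsP[u /existsP[v /and4P[uS vS ne_uv nH]]]|no_witness] :=
  boolP [exists u, exists v, [&& u \in S, v \in S, u != v & ~~ H u v]].
  by exists u, v.
exfalso; apply: not_clique => u v uS vS ne_uv; apply: contraNT no_witness => nH.
by apply/existsP; exists u; apply/existsP; exists v; rewrite uS vS ne_uv nH.
Qed.

Lemma ramsey_m_gt0 : ramsey_m G m -> 0 < m.
Proof.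
case: m => // /(_ set0 (cards0 _)) [not_clique _].
by case: not_clique => u v; rewrite inE.
Qed.

(* The values of the x-variables name m vertices.  Two equal names falsify a
   clause (1); otherwise they form an m-set, which by the Ramsey property
   contains a non-edge and an edge, falsifying a clause (3) or (2) according
   to the value of y. *)
Lemma Psi_unsat : ramsey_m G m ->
  forall a : var m k -> bool, exists2 C, Psi G C & falsifies a C.
Proof.
move=> ramsey a; set v := vertex_of a.
have [/injectiveP inj_v|/injectivePn[i [j ne_ij eq_v]]] := boolP (injectiveb v); last first.
  exists (vclause i (v i) :|: vclause j (v i)); first by left; exists (v i), i, j.
  by move=> l /setUP[]; [|rewrite eq_v]; apply: falsifies_vclause.
have card_S : #|v @: setT| = m by rewrite card_imset // cardsT card_ord.
have [not_clique not_indep] := ramsey _ card_S.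
case ay: (a (inr tt)).
  have [_ [_ [/imsetP[i _ ->] /imsetP[j _ ->] ne_v nG]]] := not_clique_exists not_clique.
  exists ([set ylit m k false] :|: vclause i (v i) :|: vclause j (v j)).
    right; right; exists (v i), (v j), i, j.
    by split=> //; split=> //; split=> //; apply: contraNneq ne_v => ->.
  by apply: falsifies_pair_clause; rewrite ay.
have [_ [_ [/imsetP[i _ ->] /imsetP[j _ ->] ne_v /negbNE G_ij]]] :=
  not_clique_exists (H := fun u w => ~~ G u w) not_indep.
exists ([set ylit m k true] :|: vclause i (v i) :|: vclause j (v j)).
  right; left; exists (v i), (v j), i, j.
  by split=> //; split=> //; split=> //; apply: contraNneq ne_v => ->.
by apply: falsifies_pair_clause; rewrite ay.
Qed.

End RamseyFormula.

Theorem mainTheorem2 (R : realType) (c : R) (hc : (0 < c)%R) :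
  exists C : nat,
    forall (k m : nat) (G : rel (vert k)),
      (c * k%:R = m%:R)%R ->
      irreflexive G -> symmetric G ->
      ramsey_m G m ->
      exists P : rproof m k,
        is_refutation (Psi G) P /\ treelike P /\
        (size P <= (2 ^ k) ^ (C * k))%N.
Proof.
have [C0 lt_cC0] : exists C0 : nat, (c < C0%:R)%R.
  by exists (Num.bound c); apply: archi_boundP; apply: ltW.
exists (C0 + 2) => k m G m_eq _ _ ramsey.
have le_m : m <= C0 * k.
  by rewrite -(ler_nat R) natrM -m_eq ler_wpM2r ?ler0n ?ltW.
have k_gt0 : 0 < k.
  by move: le_m (ramsey_m_gt0 ramsey); case: (k) => //; rewrite muln0 leqn0 => /eqP ->.
have [P [refP treeP size_P]] := treelike_refutation_of_unsat (Psi_unsat ramsey).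
exists P; split=> //; split=> //.
rewrite -expnM; apply: leq_trans (ltnW size_P) _; rewrite leq_exp2l //.
have -> : k * ((C0 + 2) * k) = C0 * k * k + (k * k).*2.
  by rewrite -mul2n mulnC mulnDl !mulnA (mulnC 2) mulnDl.
by rewrite -addn2 leq_add ?leq_mul // -[2]/(1.*2) leq_double muln_gt0 k_gt0.
Qed.
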